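(* Let $q$ be a prime power and let $n,k,r$ be integers with $n<q$, $0<r<k\le n$, $r\mid k$, $(r+1)\mid n$ and $(r+1)\mid(q-1)$. Let $t=n-k-k/r$ and assume $t\ge 0$. Then there exists a linear $[n,k,t+2]$ code over $\mathbb F_q$ with addition based repair and all-symbol locality $r$. Since every linear $[n,k,d]$ code with information locality $r$ satisfies $d\le n-\lceil k/r\rceil-k+2=t+2$, this code is optimal in terms of distance.
   Context: For a linear $[n,k,d]$ code $\mathcal C$ over $\mathbb F_q$ (length $n$, dimension $k$, minimum distance $d$), the coordinates are called nodes and are indexed by $[n]=\{1,\dots,n\}$. A node $i$ has locality $r_i$ if there is a repair set $J_i\subseteq[n]\setminus\{i\}$ of size $r_i$ and a function $\phi_i:\mathbb F_q^{r_i}\to\mathbb F_q$ such that $\phi_i$ applied to $(c_j)_{j\in J_i}$ equals $c_i$ for all $\mathbf c\in\mathcal C$. $\mathcal C$ has all-symbol locality $r$ if every node has locality at most $r$. Information locality $r$ means that the information nodes have locality at most $r$. $\mathcal C$ has addition based repair if every node $i$ has such a repair set $J_i$ with repair function $\phi_i\big((c_j)_{j\in J_i}\big)=-\sum_{j\in J_i}c_j$, i.e. $c_i+\sum_{j\in J_i}c_j=0$ for all $\mathbf c\in\mathcal C$. *)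

From HB Require Import structures.
From mathcomp Require Import all_boot all_order all_algebra all_field.
Set Implicit Arguments. Unset Strict Implicit. Unset Printing Implicit Defensive.
Import GRing.Theory.
Local Open Scope ring_scope.

(* A linear code of length n over F is a subspace of row vectors 'rV[F]_n;
   nodes are the coordinates i : 'I_n (0-based indexing of [n]). *)

Definition wt (F : fieldType) (n : nat) (c : 'rV[F]_n) : nat :=
  #|[set i : 'I_n | c 0 i != 0]|.

Definition is_nkd_code (F : fieldType) (n : nat) (C : {vspace 'rV[F]_n})
  (k d : nat) : Prop :=
  \dim C = k /\
  (exists2 c, c \in C & (c != 0) && (wt c == d)) /\
  (forall c, c \in C -> c != 0 -> (d <= wt c)%N).

Definition node_locality_le (F : fieldType) (n : nat) (C : {vspace 'rV[F]_n})
  (i : 'I_n) (r : nat) : Prop :=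
  exists (J : {set 'I_n}) (phi : seq F -> F),
    [/\ i \notin J, (#|J| <= r)%N &
        forall c, c \in C -> phi [seq c 0 j | j <- enum J] = c 0 i].

Definition all_symbol_locality (F : fieldType) (n : nat)
  (C : {vspace 'rV[F]_n}) (r : nat) : Prop :=
  forall i : 'I_n, node_locality_le C i r.

Definition addition_based_repair (F : fieldType) (n : nat)
  (C : {vspace 'rV[F]_n}) (r : nat) : Prop :=
  forall i : 'I_n, exists J : {set 'I_n},
    [/\ i \notin J, (#|J| <= r)%N &
        forall c, c \in C -> c 0 i + \sum_(j in J) c 0 j = 0].

(* Let w generate F^* and zeta = w ^+ ((q-1)/(r+1)), of order r+1.  Node
   s(r+1)+j is evaluated at w^s zeta^j, so each block of r+1 consecutive nodes
   is a coset of the (r+1)-th roots of unity, and a message g is encoded as the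
   values of x g(x).  The monomials of g are x^e with e+1 not divisible by r+1;
   on a coset of the (r+1)-th roots of unity the power sums of x^(e+1) vanish,
   so the coordinates of every codeword sum to zero on each block: this is the
   addition based repair with locality r.  There are exactly k such e below
   k + k/r - 1, so a nonzero codeword has at most k + k/r - 2 zeros.  The bound
   is attained: some nonzero codeword vanishes on the k - 1 non-final nodes of
   the first k + k/r - 2 nodes, and then on the final ones by the block sums. *)

From HB Require Import structures.
From mathcomp Require Import all_boot all_order all_algebra all_field.
From mathcomp Require Import cyclic zify.
Set Implicit Arguments. Unset Strict Implicit. Unset Printing Implicit Defensive.
Import GRing.Theory.
Local Open Scope ring_scope.

Lemma eq_mulnD_small (M a b a' b' : nat) : (b < M)%N -> (b' < M)%N ->
  (a * M + b = a' * M + b')%N -> a = a' /\ b = b'.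
Proof.
move=> b_lt b'_lt e; have M_gt0 : (0 < M)%N := leq_ltn_trans (leq0n b) b_lt.
split.
- by have := congr1 (divn^~ M) e; rewrite /= !divnMDl // !divn_small ?addn0.
- by have := congr1 (modn^~ M) e; rewrite /= !modnMDl !modn_small.
Qed.

Lemma card_le_inj_bounded (T : finType) (A : {pred T}) (f : T -> nat) b :
  {in A &, injective f} -> {in A, forall x, f x < b}%N -> (#|A| <= b)%N.
Proof.
move=> f_inj f_lt.
have := @uniq_leq_size _ [seq f x | x <- enum A] (iota 0 b).
rewrite size_map size_iota -cardE; apply.
  rewrite map_inj_in_uniq ?enum_uniq // => x y.
  by rewrite !mem_enum; exact: f_inj.
by move=> y /mapP [x]; rewrite mem_enum => /f_lt x_lt ->; rewrite mem_iota.
Qed.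

Lemma prim_root_sum_expr_eq0 (R : idomainType) (d e : nat) (z : R) :
  d.-primitive_root z -> ~~ (d %| e)%N -> \sum_(j < d) (z ^+ e) ^+ j = 0.
Proof.
move=> z_prim d_ndvd_e; have /eqP := subrX1 (z ^+ e) d.
rewrite exprAC (prim_expr_order z_prim) expr1n subrr eq_sym mulf_eq0.
rewrite subr_eq0 -(expr0 z) (eq_prim_root_expr z_prim) mod0n.
by rewrite -/(d %| e)%N (negbTE d_ndvd_e) => /eqP.
Qed.

Lemma card_roots_lt_size (F : fieldType) (I : finType) (x : I -> F)
    (p : {poly F}) :
  injective x -> p != 0 -> (#|[set i | root p (x i)]| < size p)%N.
Proof.
move=> x_inj p_neq0; set Z := [set i | _].
have := @max_poly_roots _ p [seq x i | i <- enum Z] p_neq0.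
rewrite size_map -cardE map_inj_uniq ?enum_uniq //; apply=> //.
by apply/allP => y /mapP [i]; rewrite mem_enum inE => ? ->.
Qed.

Section LinearCodes.
Variables (F : fieldType) (n : nat).

Lemma wtE (c : 'rV[F]_n) : wt c = (n - #|[set i | c 0%R i == 0%R]|)%N.
Proof.
rewrite /wt cardsCs card_ord; congr (_ - _)%N.
by apply: eq_card => i; rewrite !inE negbK.
Qed.

Lemma addition_based_repair_locality (C : {vspace 'rV[F]_n}) (r : nat) :
  addition_based_repair C r -> all_symbol_locality C r.
Proof.
move=> repC i; have [J [iNJ J_le sumJ]] := repC i.
exists J, (fun s => - \sum_(x <- s) x); split=> // c cC.
by rewrite big_map big_enum /=; apply/esym/eqP; rewrite -addr_eq0 sumJ.
Qed.

Lemma exists_codeword_vanishing (C : {vspace 'rV[F]_n}) (S : {set 'I_n}) :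
  (#|S| < \dim C)%N ->
  exists2 c, c \in C & (c != 0) && [forall i in S, c 0 i == 0].
Proof.
move=> S_lt; pose P : 'M[F]_(n, #|S|) := \matrix_(i, j) (i == enum_val j)%:R.
pose f : 'Hom('rV[F]_n, 'rV[F]_#|S|) := linfun (@mulmxr F 1 n #|S| P).
have fE c j : f c 0 j = c 0 (enum_val j).
  rewrite lfunE /= mxE (bigD1 (enum_val j)) //= mxE eqxx mulr1 big1 ?addr0 //.
  by move=> i /negbTE i_neq; rewrite mxE i_neq mulr0.
have dim_img : (\dim (f @: C) <= #|S|)%N.
  by rewrite (leq_trans (dimvS (subvf _))) // dimvf dim_matrix mul1r.
have : (C :&: lker f != 0)%VS.
  rewrite -dimv_eq0 -lt0n; move: S_lt dim_img; rewrite -(limg_ker_dim f C).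
  by move: (\dim _) (\dim _) => a b; lia.
rewrite -vpick0; have := memv_pick (C :&: lker f); rewrite memv_cap memv_ker.
move=> /andP [cC /eqP fc0] c_neq0; exists (vpick (C :&: lker f)) => //.
rewrite c_neq0; apply/forall_inP => i iS.
by rewrite -(enum_rankK_in iS iS) -fE fc0 mxE.
Qed.

Lemma prefix_le_card_zeros (c : 'rV[F]_n) (m : nat) : (m <= n)%N ->
  (forall i : 'I_n, (i < m)%N -> c 0 i = 0) ->
  (m <= #|[set i | (c 0 i == 0)%R]|)%N.
Proof.
move=> m_le_n c_prefix.
have <- : #|[set widen_ord m_le_n i | i : 'I_m]| = m.
  by rewrite card_imset ?card_ord // => i j [] /val_inj.
apply/subset_leq_card/subsetP => _ /imsetP [i _ ->].
by rewrite inE c_prefix ?eqxx; last exact: ltn_ord i.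
Qed.

End LinearCodes.

Section Construction.
Variables (F : fieldType) (N n k r : nat) (w : F).
Hypotheses (w_prim : N.-primitive_root w) (r_gt0 : (0 < r)%N)
  (r_lt_k : (r < k)%N) (r_dvd_k : (r %| k)%N) (r1_dvd_n : (r.+1 %| n)%N)
  (r1_dvd_N : (r.+1 %| N)%N) (n_le_N : (n <= N)%N)
  (kK_le_n : (k + k %/ r <= n)%N).

Local Notation R1 := r.+1.
Local Notation K := (k %/ r)%N.
Local Notation M := (N %/ r.+1)%N.

Let kE : k = (K * r)%N. Proof. by rewrite divnK. Qed.
Let NE : N = (M * R1)%N. Proof. by rewrite divnK. Qed.

Definition zeta : F := w ^+ M.

Lemma zeta_prim : R1.-primitive_root zeta.
Proof. exact: dvdn_prim_root. Qed.

Definition eval_point (l : 'I_n) : F := w ^+ (l %/ R1)%N * zeta ^+ (l %% R1)%N.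

Lemma eval_pointE l : eval_point l = w ^+ (l %% R1 * M + l %/ R1)%N.
Proof. by rewrite /eval_point /zeta -exprM mulnC exprD mulrC. Qed.

Lemma eval_point_neq0 l : eval_point l != 0.
Proof.
rewrite eval_pointE expf_neq0 // (prim_root_eq0 w_prim) -lt0n.
exact: prim_order_gt0 w_prim.
Qed.

Lemma eval_point_inj : injective eval_point.
Proof.
have block_lt (l : 'I_n) : (l %/ R1 < M)%N.
  by rewrite ltn_divLR // -NE; have := ltn_ord l; lia.
have index_lt (l : 'I_n) : (l %% R1 * M + l %/ R1 < N)%N.
  have := NE; have := block_lt l; have := ltn_pmod l (ltn0Sn r).
  by move: (l %% R1)%N (l %/ R1)%N M => x y m; nia.
move=> l l' /eqP; rewrite !eval_pointE (eq_prim_root_expr w_prim).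
rewrite (modn_small (index_lt l)) (modn_small (index_lt l')).
move=> /eqP /(eq_mulnD_small (block_lt l) (block_lt l')).
case=> e_mod e_div.
by apply: val_inj; rewrite /= (divn_eq l R1) (divn_eq l' R1) e_mod e_div.
Qed.

Definition group_node (l : 'I_n) (j : 'I_R1) : 'I_n :=
  insubd l (l %/ R1 * R1 + j)%N.

Lemma group_nodeE l j : group_node l j = (l %/ R1 * R1 + j)%N :> nat.
Proof.
rewrite val_insubd; case: ifP => // /negP []; have := ltn_ord j.
have : (l %/ R1 < n %/ R1)%N by rewrite ltn_divLR // divnK.
by have := divnK r1_dvd_n; move: (l %/ R1)%N (n %/ R1)%N => x y; nia.
Qed.

Lemma group_node_div l j : (group_node l j %/ R1 = l %/ R1)%N.
Proof. by rewrite group_nodeE divnMDl // (divn_small (ltn_ord j)) addn0. Qed.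

Lemma group_node_mod l j : (group_node l j %% R1 = j)%N.
Proof. by rewrite group_nodeE modnMDl (modn_small (ltn_ord j)). Qed.

Lemma group_node_inj l : injective (group_node l).
Proof.
move=> j j' e; apply: val_inj.
by rewrite /= -(group_node_mod l j) -(group_node_mod l j') e.
Qed.

Definition repair_group (l : 'I_n) : {set 'I_n} :=
  [set group_node l j | j : 'I_R1].

Lemma mem_repair_group l l' : (l' \in repair_group l) = (l' %/ R1 == l %/ R1)%N.
Proof.
apply/imsetP/eqP => [[j _ ->] | same_block]; first exact: group_node_div.
exists (inord (l' %% R1)) => //; apply: val_inj.
by rewrite /= group_nodeE inordK ?ltn_pmod // -same_block -divn_eq.
Qed.

Lemma card_repair_group l : #|repair_group l| = R1.
Proof. by rewrite card_imset ?card_ord //; exact: group_node_inj. Qed.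

Lemma sum_repair_group_expr l e : ~~ (R1 %| e)%N ->
  \sum_(l' in repair_group l) eval_point l' ^+ e = 0.
Proof.
move=> e_ndvd; rewrite (big_imset _ (in2W (@group_node_inj l))) /=.
under eq_bigr do rewrite /eval_point group_node_div group_node_mod exprMn
  [(zeta ^+ _) ^+ e]exprAC.
by rewrite -mulr_sumr (prim_root_sum_expr_eq0 zeta_prim) ?mulr0.
Qed.

(* [(exponent i).+1] enumerates the integers of [1, k + k/r - 1] that are not
   multiples of r+1. *)
Definition exponent (i : 'I_k) : nat := (i + i %/ r)%N.

Lemma exponent_inj : injective exponent.
Proof.
have mono (i j : 'I_k) : (i < j)%N -> (exponent i < exponent j)%N.
  by move=> lt_ij; rewrite /exponent -addSn leq_add // leq_div2r // ltnW.
move=> i j e; case: (ltngtP i j) => [/mono | /mono | /val_inj //];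
  by rewrite e ltnn.
Qed.

Lemma exponent_lt i : (exponent i < (k + K).-1)%N.
Proof.
have : (i %/ r < K)%N by rewrite ltn_divLR // -kE.
by have := ltn_ord i; rewrite /exponent; lia.
Qed.

Lemma R1_ndvd_exponentS i : ~~ (R1 %| (exponent i).+1)%N.
Proof.
have -> : ((exponent i).+1 = (i %% r).+1 + i %/ r * R1)%N.
  by have := divn_eq i r; rewrite /exponent; nia.
by rewrite dvdn_addl ?dvdn_mull // gtnNdvd // ltnS ltn_pmod.
Qed.

Definition generator (i : 'I_k) : 'rV[F]_n :=
  \row_l eval_point l ^+ (exponent i).+1.

Definition generators : k.-tuple 'rV[F]_n := [tuple generator i | i < k].

Definition code : {vspace 'rV[F]_n} := <<generators>>%VS.

Definition message_poly (a : 'I_k -> F) : {poly F} :=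
  \sum_i a i *: 'X^(exponent i).

Lemma combination_eval (a : 'I_k -> F) l :
  (\sum_i a i *: generators`_i) 0 l =
    eval_point l * (message_poly a).[eval_point l].
Proof.
rewrite summxE horner_sum mulr_sumr; apply: eq_bigr => i _.
by rewrite nth_mktuple !mxE hornerZ hornerXn exprS mulrCA.
Qed.

Lemma coef_message_poly a i : (message_poly a)`_(exponent i) = a i.
Proof.
rewrite coef_sum (bigD1 i) //= coefZ coefXn eqxx mulr1 big1 ?addr0 //.
move=> j j_neq.
by rewrite coefZ coefXn (inj_eq exponent_inj) eq_sym (negbTE j_neq) mulr0.
Qed.

Lemma size_message_poly a : (size (message_poly a) <= (k + K).-1)%N.
Proof.
apply/leq_sizeP => d d_ge; rewrite coef_sum big1 // => i _.
rewrite coefZ coefXn; case: eqP => [d_eq | _]; last exact: mulr0.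
by have := exponent_lt i; rewrite -d_eq ltnNge d_ge.
Qed.

Lemma card_zeros_combination (a : 'I_k -> F) i0 : a i0 != 0 ->
  (#|[set l | ((\sum_i a i *: generators`_i) 0 l == 0)%R]| < (k + K).-1)%N.
Proof.
move=> a_neq0; have p_neq0 : message_poly a != 0.
  by apply: contraNneq a_neq0 => p0; rewrite -coef_message_poly p0 coef0.
have -> : [set l | (\sum_i a i *: generators`_i) 0 l == 0] =
          [set l | root (message_poly a) (eval_point l)].
  apply/setP => l; rewrite !inE combination_eval mulf_eq0.
  by rewrite (negbTE (eval_point_neq0 l)).
apply: leq_trans (size_message_poly a).
exact: card_roots_lt_size eval_point_inj p_neq0.
Qed.

Lemma free_generators : free generators.
Proof.
apply/freeP => a a0 i; apply/eqP; apply: contraT => a_neq0.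
have := card_zeros_combination a_neq0; rewrite a0.
have -> : [set l | (0 : 'rV[F]_n) 0 l == 0] = setT.
  by apply/setP => l; rewrite !inE mxE eqxx.
by rewrite cardsT card_ord; move: kK_le_n; lia.
Qed.

Lemma dim_code : \dim code = k.
Proof. by rewrite /code (eqP free_generators) size_tuple. Qed.

Lemma code_wt_ge c : c \in code -> c != 0 -> (n - k - K + 2 <= wt c)%N.
Proof.
move=> cC c_neq0; have c_comb := coord_span cC.
case: (pickP (fun i => coord generators i c != 0)) => [i ci_neq0 | all0].
  have := @card_zeros_combination (coord generators ^~ c) i ci_neq0.
  rewrite -c_comb wtE.
  by move: kK_le_n (#|_|); lia.
case/negP: c_neq0; rewrite c_comb big1 // => i _.
by rewrite (eqP (negbFE (all0 i))) scale0r.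
Qed.

Lemma code_repair_group_sum c l : c \in code ->
  \sum_(l' in repair_group l) c 0 l' = 0.
Proof.
move=> /coord_span ->; under eq_bigr do rewrite summxE.
rewrite exchange_big big1 // => i _.
under eq_bigr do rewrite nth_mktuple !mxE.
by rewrite -mulr_sumr sum_repair_group_expr ?mulr0 // R1_ndvd_exponentS.
Qed.

Lemma code_repair c l : c \in code ->
  c 0 l + \sum_(l' in repair_group l :\ l) c 0 l' = 0.
Proof.
have l_in : l \in repair_group l by rewrite mem_repair_group.
move=> cC; rewrite -[RHS](code_repair_group_sum l cC) (bigD1 l l_in) /=.
by congr (_ + _); apply: eq_bigl => l'; rewrite in_setD1 andbC.
Qed.

Lemma code_addition_based_repair : addition_based_repair code r.
Proof.
move=> l; exists (repair_group l :\ l); split; first by rewrite setD11.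
  have := cardsD1 l (repair_group l).
  by rewrite card_repair_group mem_repair_group eqxx => -[->].
by move=> c; exact: code_repair.
Qed.

Definition nonlast_prefix : {set 'I_n} :=
  [set l : 'I_n | (l < k + K - 2)%N && (l %% R1 != r)%N].

Let mod_lt_of_neq (x : nat) : (x %% R1 != r)%N -> (x %% R1 < r)%N.
Proof. by have := ltn_pmod x (ltn0Sn r); lia. Qed.

Lemma card_nonlast_prefix : (#|nonlast_prefix| < k)%N.
Proof.
suff : (#|nonlast_prefix| <= k.-1)%N by lia.
apply: (@card_le_inj_bounded _ _ (fun l : 'I_n => l %/ R1 * r + l %% R1)%N).
  move=> l l'; rewrite !inE => /andP [_ /mod_lt_of_neq l_lt].
  move=> /andP [_ /mod_lt_of_neq l'_lt] /(eq_mulnD_small l_lt l'_lt).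
  case=> e_div e_mod; apply: val_inj.
  by rewrite /= (divn_eq l R1) (divn_eq l' R1) e_div e_mod.
move=> l; rewrite inE => /andP [l_lt /mod_lt_of_neq j_lt].
have := divn_eq l R1; have := kE.
by move: (l %/ R1)%N (l %% R1)%N j_lt => s j; nia.
Qed.

Lemma code_vanishing_prefix c : c \in code ->
  {in nonlast_prefix, forall l, c 0 l = 0} ->
  forall l : 'I_n, (l < k + K - 2)%N -> c 0 l = 0.
Proof.
move=> cC c_S l l_lt; case: (eqVneq (l %% R1)%N r) => [l_last | l_not_last].
  have := code_repair l cC; rewrite big1 ?addr0 // => l'.
  rewrite in_setD1 mem_repair_group => /andP [l'_neq /eqP same_block].
  have l'_not_last : (l' %% R1 != r)%N.
    apply: contra l'_neq => /eqP l'_last; apply/eqP/val_inj.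
    by rewrite /= (divn_eq l' R1) (divn_eq l R1) same_block l'_last l_last.
  apply: c_S; rewrite inE l'_not_last andbT.
  have := mod_lt_of_neq l'_not_last; have := divn_eq l' R1.
  have := divn_eq l R1; rewrite same_block l_last.
  by move: (l %/ R1 * R1)%N (l' %% R1)%N; lia.
by apply: c_S; rewrite inE l_lt.
Qed.

Lemma code_wt_attained :
  exists2 c, c \in code & (c != 0) && (wt c == n - k - K + 2)%N.
Proof.
have [|c cC /andP [c_neq0 /forall_inP c_S]] :=
  @exists_codeword_vanishing _ _ code nonlast_prefix.
  by rewrite dim_code card_nonlast_prefix.
exists c => //; rewrite c_neq0 eqn_leq code_wt_ge // andbT wtE.
have prefix_le_n : (k + K - 2 <= n)%N by lia.
have c_prefix := code_vanishing_prefix cC (fun l lS => eqP (c_S l lS)).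
have := prefix_le_card_zeros prefix_le_n c_prefix.
by move: (#|_|); lia.
Qed.

Lemma code_is_nkd : is_nkd_code code k (n - k - K + 2).
Proof.
split; first exact: dim_code.
by split; [exact: code_wt_attained | exact: code_wt_ge].
Qed.

End Construction.

Lemma finField_prim_root (F : finFieldType) :
  exists w : F, (#|F|.-1).-primitive_root w.
Proof.
have q_gt1 : (1 < #|F|)%N := finNzRing_gt1 F.
have /hasP [w _ w_prim] : has (#|F|.-1).-primitive_root (enum (predC1 (0 : F))).
  apply: has_prim_root; rewrite ?enum_uniq // -?cardE ?cardC1 //; first lia.
  apply/allP => x; rewrite mem_enum /= => x_neq0; apply/unity_rootP.
  by apply: (mulfI x_neq0); rewrite -exprS prednK ?expf_card ?mulr1 // ltnW.
by exists w.
Qed.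

Theorem theorem5 (F : finFieldType) (n k r : nat) :
  (n < #|F|)%N -> (0 < r)%N -> (r < k)%N -> (k <= n)%N ->
  (r %| k)%N -> (r.+1 %| n)%N -> (r.+1 %| #|F|.-1)%N ->
  (k + k %/ r <= n)%N ->
  exists C : {vspace 'rV[F]_n},
    [/\ is_nkd_code C k ((n - k - k %/ r) + 2)%N,
        all_symbol_locality C r &
        addition_based_repair C r].
Proof.
move=> n_lt_q r_gt0 r_lt_k _ r_dvd_k r1_dvd_n r1_dvd_q1 kK_le_n.
have [w w_prim] := finField_prim_root F.
have n_le_q1 : (n <= #|F|.-1)%N by lia.
have [nkd repair] := conj
  (code_is_nkd w_prim r_gt0 r_lt_k r_dvd_k r1_dvd_n r1_dvd_q1 n_le_q1 kK_le_n)
  (code_addition_based_repair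
     w_prim r_gt0 r_lt_k r_dvd_k r1_dvd_n r1_dvd_q1 n_le_q1 kK_le_n).
exists (code #|F|.-1 n k r w); split=> //.
exact: addition_based_repair_locality.
Qed.
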